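(* Let $\Lambda$ be the preprojective algebra of a simply-laced Dynkin graph $\Delta$ over an algebraically closed field $K$, with primitive idempotents $e_i$ ($i\in\Delta_0$). Let $\phi\in\mathrm{Aut}(\Lambda)$, and let $\rho^\phi$ be the permutation of $\Delta_0$ such that $\phi(e_i)=\lambda e_{\rho^\phi(i)}\lambda^{-1}$ for all $i\in\Delta_0$ for some unit $\lambda\in\Lambda^\times$. Then $\rho^\phi$ is a graph automorphism of $\Delta$.
   Context: For every $\phi\in\mathrm{Aut}(\Lambda)$ there exist a unit $\lambda\in\Lambda^\times$ and a unique permutation $\rho^\phi$ of $\Delta_0$ with $\phi(e_i)=\lambda e_{\rho^\phi(i)}\lambda^{-1}$ for all $i$; $\rho^\phi$ depends only on the class of $\phi$ in $\mathrm{Out}(\Lambda)=\mathrm{Aut}(\Lambda)/\mathrm{Inn}(\Lambda)$. *)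

From HB Require Import structures.
From mathcomp Require Import all_boot all_order all_algebra all_fingroup.
Set Implicit Arguments. Unset Strict Implicit. Unset Printing Implicit Defensive.
Import GRing.Theory.
Local Open Scope ring_scope.

Inductive dynkin_type := TA of nat | TD of nat | TE of nat.

Definition dynkin_valid (t : dynkin_type) : bool :=
  match t with
  | TA n => (0 < n)%N
  | TD n => (3 < n)%N
  | TE n => (5 < n)%N && (n < 9)%N
  end.

Definition dynkin_rank (t : dynkin_type) : nat :=
  match t with TA n | TD n | TE n => n end.

Definition path_adj (m i j : nat) : bool :=
  ((i.+1 == j) && (j < m)%N) || ((j.+1 == i) && (i < m)%N).

(* standard labelled Dynkin graphs on {0,...,n-1}:
   A_n : path 0 - ... - (n-1)
   D_n : path 0 - ... - (n-2), plus an edge (n-1) - (n-3)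
   E_n : path 0 - ... - (n-2), plus an edge (n-1) - 2 *)
Definition dynkin_adj_nat (t : dynkin_type) (i j : nat) : bool :=
  match t with
  | TA n => path_adj n i j
  | TD n => [|| path_adj n.-1 i j, (i == n.-1) && (j == n - 3)%N
              | (j == n.-1) && (i == n - 3)%N]
  | TE n => [|| path_adj n.-1 i j, (i == n.-1) && (j == 2%N)
              | (j == n.-1) && (i == 2%N)]
  end.

Definition is_dynkin_graph (V : finType) (adj : rel V) : Prop :=
  exists t : dynkin_type, dynkin_valid t /\
    exists f : V -> 'I_(dynkin_rank t),
      bijective f /\ forall u v, adj u v = dynkin_adj_nat t (f u) (f v).

Definition graph_automorphism (V : finType) (adj : rel V) (rho : {perm V}) : Prop :=
  forall u v, adj (rho u) (rho v) = adj u v.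

(* Orientation of the Dynkin graph used for the preprojective relation:
   the arrow i -> j is in Q when i precedes j in the enumeration of V;
   the other one is the starred arrow. *)
Definition pp_sign (R : nzRingType) (V : finType) (i j : V) : R :=
  if (enum_rank i < enum_rank j)%N then 1 else -1.

(* e i = trivial path at i; x i j = arrow i -> j of the double quiver
   (zero when i, j are not adjacent); paths are written left to right. *)
Definition preproj_rel (R : nzRingType) (V : finType) (adj : rel V)
    (e : V -> R) (x : V -> V -> R) : Prop :=
  [/\ forall i j, e i * e j = (if i == j then e i else 0),
      \sum_i e i = 1,
      forall i j, x i j = e i * x i j * e j,
      forall i j, ~~ adj i j -> x i j = 0
    & forall i, \sum_(j | adj i j) pp_sign R i j * (x i j * x j i) = 0].

(* (A, e, x) is the preprojective algebra of adj over K: the K-algebra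
   presented by the generators e, x subject to the relations above
   (universal property). *)
Definition is_preprojective (K : fieldType) (V : finType) (adj : rel V)
    (A : algType K) (e : V -> A) (x : V -> V -> A) : Prop :=
  preproj_rel adj e x /\
  forall (B : algType K) (e' : V -> B) (x' : V -> V -> B),
    preproj_rel adj e' x' ->
    (exists f : {lrmorphism A -> B},
        (forall i, f (e i) = e' i) /\ (forall i j, f (x i j) = x' i j)) /\
    (forall f g : {lrmorphism A -> B},
        (forall i, f (e i) = e' i) -> (forall i j, f (x i j) = x' i j) ->
        (forall i, g (e i) = e' i) -> (forall i j, g (x i j) = x' i j) ->
        f =1 g).

From HB Require Import structures.
From mathcomp Require Import all_boot all_order all_algebra all_fingroup.
From mathcomp Require Import zify.
Import GRing.Theory.
Set Implicit Arguments. Unset Strict Implicit.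
Local Open Scope ring_scope.

(* Conjugating phi by lam yields an automorphism psi of Lambda with
   psi(e_i) = e_(rho i).  Suppose rho u and rho v are adjacent but u and v are
   not.  For s in K, the two-dimensional representation G_s sending e_(rho u),
   e_(rho v) to the diagonal matrix units and the arrow rho u -> rho v to
   s E_12 (all other generators to 0) kills psi(x_ij) for every edge i - j,
   since psi(x_ij) lies in e_(rho i) Lambda e_(rho j) and {i, j} <> {u, v}.
   Hence G_1 o psi and G_0 o psi agree on the generators, so they are equal,
   which contradicts the surjectivity of psi.  Thus rho reflects adjacency, and
   a permutation of a finite set reflecting a relation preserves it. *)

Lemma dynkin_adj_nat_irrefl (t : dynkin_type) (i : nat) :
  dynkin_valid t -> ~~ dynkin_adj_nat t i i.
Proof.
case: t => n /= valid; rewrite /path_adj !(eqn_leq i.+1 i) ltnn //=.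
all: by apply/negP; case/orP=> /andP[/eqP-> /eqP]; lia.
Qed.

Lemma dynkin_adj_natC (t : dynkin_type) (i j : nat) :
  dynkin_adj_nat t i j = dynkin_adj_nat t j i.
Proof. by case: t => n /=; rewrite /path_adj; apply/idP/idP; lia. Qed.

Lemma dynkin_graph_irrefl (V : finType) (adj : rel V) :
  is_dynkin_graph adj -> irreflexive adj.
Proof.
by move=> [t [valid [f [_ adjE]]]] u; rewrite adjE (negPf (dynkin_adj_nat_irrefl _ valid)).
Qed.

Lemma dynkin_graph_sym (V : finType) (adj : rel V) :
  is_dynkin_graph adj -> symmetric adj.
Proof. by move=> [t [_ [f [_ adjE]]]] u v; rewrite !adjE dynkin_adj_natC. Qed.

Lemma perm_rel_mono (T : finType) (r : rel T) (s : {perm T}) :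
  (forall u v, r (s u) (s v) -> r u v) -> {mono s : u v / r u v}.
Proof.
move=> rs_r u v; pose s2 (p : T * T) := (s p.1, s p.2).
have s2_inj : injective s2 by move=> [p1 p2] [q1 q2] [/perm_inj-> /perm_inj->].
pose E := [set p : T * T | r p.1 p.2].
have sub : s2 @^-1: E \subset E by apply/subsetP=> -[p1 p2]; rewrite !inE => /rs_r.
by have := subset_cardP (card_preimset E s2_inj) sub (u, v); rewrite !inE.
Qed.

(* The proofs [lm] and [ml] are unused in the body; carrying them lets the
   lrmorphism instance below be declared on [inner_aut lm ml]. *)
Definition inner_aut (K : fieldType) (B : algType K) (l m : B)
  (lm : l * m = 1) (ml : m * l = 1) (b : B) : B := m * b * l.

Section InnerAutomorphism.
Variables (K : fieldType) (B : algType K) (l m : B).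
Hypotheses (lm : l * m = 1) (ml : m * l = 1).

Lemma inner_aut_is_linear : linear (inner_aut lm ml).
Proof. by move=> a u v; rewrite /inner_aut mulrDr mulrDl -scalerAr -scalerAl. Qed.

Lemma inner_aut_is_monoid_morphism : monoid_morphism (inner_aut lm ml).
Proof.
split=> [|u v]; first by rewrite /inner_aut mulr1.
by rewrite /inner_aut -!mulrA (mulrA l) lm mul1r.
Qed.

Lemma inner_autK (b : B) : inner_aut lm ml (l * b * m) = b.
Proof. by rewrite /inner_aut !mulrA ml mul1r -mulrA ml mulr1. Qed.

End InnerAutomorphism.

HB.instance Definition _ (K : fieldType) (B : algType K) (l m : B)
  (lm : l * m = 1) (ml : m * l = 1) :=
  GRing.isLinear.Build K B B *:%R (inner_aut lm ml) (inner_aut_is_linear lm ml).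
HB.instance Definition _ (K : fieldType) (B : algType K) (l m : B)
  (lm : l * m = 1) (ml : m * l = 1) :=
  GRing.isMonoidMorphism.Build B B (inner_aut lm ml)
    (inner_aut_is_monoid_morphism lm ml).

Section PreprojectiveMorphisms.
Variables (K : fieldType) (V : finType) (adj : rel V).

Lemma preproj_rel_lrmorphism (A B : algType K) (e : V -> A) (x : V -> V -> A)
    (f : {lrmorphism A -> B}) :
  preproj_rel adj e x -> preproj_rel adj (f \o e) (fun i j => f (x i j)).
Proof.
case=> e_idem e_sum x_sandwich x_nonadj x_rel; split=> /=.
- by move=> i j; rewrite -rmorphM e_idem; case: eqP; rewrite ?rmorph0.
- by rewrite -rmorph_sum e_sum rmorph1.
- by move=> i j; rewrite -!rmorphM -x_sandwich.
- by move=> i j /x_nonadj->; rewrite rmorph0.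
- move=> i; rewrite -[RHS](rmorph0 f) -(x_rel i) rmorph_sum; apply: eq_bigr => j _.
  by rewrite !rmorphM /pp_sign; case: ifP; rewrite ?rmorph1 ?rmorphN1.
Qed.

Lemma preproj_lrmorphism_eq (A B : algType K) (e : V -> A) (x : V -> V -> A)
    (f g : {lrmorphism A -> B}) :
  is_preprojective adj e x ->
  (forall i, f (e i) = g (e i)) -> (forall i j, f (x i j) = g (x i j)) -> f =1 g.
Proof.
move=> [rel univ] fg_e fg_x.
have [_ uniq] := univ _ _ _ (preproj_rel_lrmorphism f rel).
by apply: uniq => // i; rewrite /= fg_e.
Qed.

End PreprojectiveMorphisms.

Section ArrowRepresentation.
Variables (K : fieldType) (V : finType) (a b : V).

Definition arrow_idem (i : V) : 'M[K]_2 :=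
  if i == a then delta_mx 0 0 else if i == b then delta_mx 1 1 else 0.

Definition arrow_gen (s : K) (i j : V) : 'M[K]_2 :=
  if (i == a) && (j == b) then s *: delta_mx 0 1 else 0.

Lemma arrow_idem_out (i : V) : i != a -> i != b -> arrow_idem i = 0.
Proof. by rewrite /arrow_idem => /negPf-> /negPf->. Qed.

Hypothesis ab : a != b.

Lemma arrow_idemM (i j : V) :
  arrow_idem i * arrow_idem j = if i == j then arrow_idem i else 0.
Proof.
rewrite -mulmxE; have [<-|ij] := altP (i =P j).
  by rewrite /arrow_idem; do 2?case: ifP => _; rewrite ?mul_delta_mx ?mul0mx.
rewrite /arrow_idem; case: (i =P a) => [ia|_]; case: (j =P a) => [ja|_];
  case: (i =P b) => [ib|_]; case: (j =P b) => [jb|_];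
  rewrite ?mul_delta_mx_0 ?mulmx0 ?mul0mx //.
all: by move: ij ab; subst; rewrite !eqxx ?andbF.
Qed.

Lemma sum_arrow_idem : \sum_i arrow_idem i = 1.
Proof.
have ba : b != a by rewrite eq_sym.
rewrite (bigD1 a) // (bigD1 b) //= big1 => [|i /andP[ib ia]]; last exact: arrow_idem_out.
rewrite /arrow_idem eqxx (negPf ba) eqxx addr0.
apply/matrixP=> k l; rewrite !mxE.
by case: k l => [[|[|//]] ?] [[|[|//]] ?]; rewrite /= ?addr0 ?add0r.
Qed.

Lemma preproj_rel_arrow (adj : rel V) (s : K) :
  adj a b -> preproj_rel adj arrow_idem (arrow_gen s).
Proof.
have ba : b != a by rewrite eq_sym.
move=> adj_ab; split=> [||i j|i j|i].
- exact: arrow_idemM.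
- exact: sum_arrow_idem.
- rewrite /arrow_gen; case: andP => [[/eqP-> /eqP->]|]; last by rewrite mulr0 mul0r.
  rewrite /arrow_idem eqxx (negPf ba) eqxx -!mulmxE -scalemxAr -scalemxAl.
  by rewrite !mul_delta_mx.
- by rewrite /arrow_gen; case: andP => // -[/eqP-> /eqP->]; rewrite adj_ab.
- apply: big1 => j _; rewrite /arrow_gen.
  by case: ifP => [/andP[_ /eqP->]|_]; rewrite ?(negPf ba) /= ?(mulr0, mul0r).
Qed.

End ArrowRepresentation.

Arguments arrow_idem {K V} a b i.

Lemma edge_notin_nonedge (V : finType) (adj : rel V) (u v i j : V) :
  irreflexive adj -> symmetric adj -> ~~ adj u v -> adj i j ->
  (i \notin [:: u; v]) || (j \notin [:: u; v]).
Proof.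
move=> irr sym Nuv adj_ij; rewrite -negb_and; apply: contraL adj_ij.
rewrite !inE => /andP[/orP[]/eqP-> /orP[]/eqP->]; rewrite ?irr //.
by rewrite sym.
Qed.

Lemma preproj_endo_reflects_adj (K : fieldType) (V : finType) (adj : rel V)
    (A : algType K) (e : V -> A) (x : V -> V -> A)
    (psi : {lrmorphism A -> A}) (rho : {perm V}) :
  irreflexive adj -> symmetric adj -> is_preprojective adj e x ->
  (forall y, exists z, psi z = y) -> (forall i, psi (e i) = e (rho i)) ->
  forall u v, adj (rho u) (rho v) -> adj u v.
Proof.
move=> irr sym pp psi_onto psi_e u v adj_rho_uv; apply/contraT => Nuv.
have ab : rho u != rho v by apply: contraTneq adj_rho_uv => ->; rewrite irr.
have [[_ _ x_sandwich x_nonadj _] univ] := pp.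
have arrow_rep (s : K) : exists G : {lrmorphism A -> 'M[K]_2},
    (forall i, G (e i) = arrow_idem (rho u) (rho v) i) /\
    (forall i j, G (x i j) = arrow_gen (rho u) (rho v) s i j).
  by have [] := univ _ _ _ (preproj_rel_arrow ab s adj_rho_uv).
have vanish (G : {lrmorphism A -> 'M[K]_2}) :
    (forall i, G (e i) = arrow_idem (rho u) (rho v) i) -> forall i j, G (psi (x i j)) = 0.
  move=> G_e i j; have [adj_ij | /x_nonadj->] := boolP (adj i j); last first.
    by rewrite !rmorph0.
  have -> : G (psi (x i j)) = G (e (rho i)) * G (psi (x i j)) * G (e (rho j)).
    by rewrite -!rmorphM -!psi_e -!rmorphM -x_sandwich.
  rewrite !G_e.
  have := edge_notin_nonedge irr sym Nuv adj_ij; rewrite !inE.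
  case/orP=> /norP[iu iv].
    by rewrite (arrow_idem_out K (i := rho i)) ?mul0r // (inj_eq perm_inj).
  by rewrite (arrow_idem_out K (i := rho j)) ?mulr0 // (inj_eq perm_inj).
have [G1 [G1_e G1_x]] := arrow_rep 1; have [G0 [G0_e G0_x]] := arrow_rep 0.
have G10 : (G1 \o psi : {lrmorphism A -> 'M[K]_2}) =1 (G0 \o psi : {lrmorphism _ -> _}).
  apply: (preproj_lrmorphism_eq pp) => [i|i j] /=; first by rewrite !psi_e G1_e G0_e.
  by rewrite !vanish.
have [z psi_z] := psi_onto (x (rho u) (rho v)).
have := G10 z; rewrite /= psi_z G1_x G0_x /arrow_gen !eqxx scale1r scale0r.
by move/matrixP/(_ 0 1); rewrite !mxE /= => /eqP; rewrite oner_eq0.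
Qed.

Theorem lemma4p6 (K : closedFieldType) (V : finType) (adj : rel V)
    (A : algType K) (e : V -> A) (x : V -> V -> A)
    (phi : {lrmorphism A -> A}) (rho : {perm V}) :
  is_dynkin_graph adj ->
  is_preprojective adj e x ->
  bijective phi ->
  (exists lam mu : A,
      [/\ lam * mu = 1, mu * lam = 1 & forall i, phi (e i) = lam * e (rho i) * mu]) ->
  graph_automorphism adj rho.
Proof.
move=> dynkin pp [phi_inv _ phiK] [lam [mu [lam_mu mu_lam phi_e]]].
pose psi := (inner_aut lam_mu mu_lam \o phi : {lrmorphism A -> A}).
apply: perm_rel_mono; apply: (preproj_endo_reflects_adj (psi := psi) _ _ pp).
- exact: dynkin_graph_irrefl dynkin.
- exact: dynkin_graph_sym dynkin.
- by move=> y; exists (phi_inv (lam * y * mu)); rewrite /= phiK inner_autK.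
- by move=> i; rewrite /= phi_e inner_autK.
Qed.
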